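(* For every $n\ge 0$, the derivation $u_{\delta_{2n}}$ belongs to $\mathfrak{krv}$, where $\delta_{2n}=\Theta(x\otimes\operatorname{ad}_y^{\,2n}(x))$.
   Context: $A=\mathbb{R}\langle x,y\rangle$; $L\subset A$ the free Lie algebra on $x,y$; $\operatorname{ad}_y(l)=[y,l]$. $\operatorname{tr}$ is the projection $A\to A/\operatorname{span}\{ab-ba\}$. $F(L)$ is the quotient of $L\otimes L$ by the span of $a\otimes b-b\otimes a$ and $a\otimes[b,c]-[a,b]\otimes c$, with projection $\Theta$, regarded inside $A/\operatorname{span}\{ab-ba\}$ via $\Theta(a\otimes b)\mapsto\operatorname{tr}(ab)$. For $x_0\in\{x,y\}$, $\partial_{x_0}$ maps cyclic words by $\operatorname{tr}(a_1\cdots a_n)\mapsto\sum_{i:\,a_i=x_0}a_{i+1}\cdots a_n a_1\cdots a_{i-1}$. For $\Gamma\in F(L)$, $u_\Gamma$ is the derivation of $L$ with $u_\Gamma(x)=\partial_y\Gamma$, $u_\Gamma(y)=-\partial_x\Gamma$. For $l\in A$, $\partial^L_{x_0}(l)=\sum\partial^1\,\epsilon(\partial^2)\in A$, where $\sum\partial^1\otimes\partial^2$ is the sum over occurrences of $x_0$ in monomials of (prefix)$\otimes$(suffix) and $\epsilon$ is the constant term. $\operatorname{div}(u)=\operatorname{tr}(\partial^L_x(u(x))+\partial^L_y(u(y)))$, and $\mathfrak{krv}=\{u\in\operatorname{Der}(L):u([x,y])=0,\ \operatorname{div}(u)=0\}$. *)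

From Stdlib Require Import Rdefinitions.
From mathcomp Require Import all_boot all_order all_algebra.
From mathcomp Require Import Rstruct.

Set Implicit Arguments.
Unset Strict Implicit.
Unset Printing Implicit Defensive.
Import GRing.Theory Num.Theory.
Local Open Scope ring_scope.

Definition lx : bool := false.
Definition ly : bool := true.

(* The free associative algebra R<x,y>: an element is its coefficient function on
   words (we only ever use finitely supported ones; see [is_poly]). *)
Definition A := seq bool -> R.

Definition A0 : A := fun _ => 0.
Definition addA (p q : A) : A := fun w => p w + q w.
Definition oppA (p : A) : A := fun w => - p w.
Definition scaleA (c : R) (p : A) : A := fun w => c * p w.
Definition mulA (p q : A) : A :=
  fun w => \sum_(i < (size w).+1) p (take i w) * q (drop i w).
Definition letter (c : bool) : A := fun w => (w == [:: c])%:R.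
Definition X : A := letter lx.
Definition Y : A := letter ly.

Definition is_poly (p : A) : Prop :=
  exists s : seq (seq bool), forall w, w \notin s -> p w = 0.

Definition brA (p q : A) : A := addA (mulA p q) (oppA (mulA q p)).
Definition ady (p : A) : A := brA Y p.

(* The free Lie algebra L on x,y inside A: the smallest subspace containing x, y
   and closed under commutators (closed under extensional equality of
   coefficient functions). *)
Inductive inL : A -> Prop :=
  | L_x : inL X
  | L_y : inL Y
  | L_add p q : inL p -> inL q -> inL (addA p q)
  | L_scale c p : inL p -> inL (scaleA c p)
  | L_br p q : inL p -> inL q -> inL (brA p q)
  | L_ext p q : inL p -> (forall w, p w = q w) -> inL q.

(* tr p = 0 in A/span{ab - ba}: p is a finite sum of commutators of elements of A *)
Definition tr_eq0 (p : A) : Prop :=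
  exists s : seq (A * A),
    (forall i : nat, (i < size s)%N ->
        is_poly (nth (A0, A0) s i).1 /\ is_poly (nth (A0, A0) s i).2) /\
    is_poly p /\
    forall w, p w = \sum_(i < size s) brA (nth (A0, A0) s i).1 (nth (A0, A0) s i).2 w.

(* cyclic derivative: on a representative p of tr(p),
   d_c tr(a_1...a_n) = sum_{i : a_i = c} a_{i+1}...a_n a_1...a_{i-1}.
   Coefficient of v: sum over splittings v = a ++ b of p(b ++ c :: a). *)
Definition cder (c : bool) (p : A) : A :=
  fun v => \sum_(i < (size v).+1) p (drop i v ++ c :: take i v).

Definition dL (c : bool) (p : A) : A := fun v => p (rcons v c).

(* The derivation of A with x |-> ux, y |-> uy:
   a c b |-> a (u c) b; coefficient of w sums over w = a ++ v ++ b. *)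
Definition der_ext (ux uy : A) (p : A) : A :=
  fun w => \sum_(i < (size w).+1) \sum_(j < (size w - i).+1) \sum_(c : bool)
     p (take i w ++ c :: drop (i + j) w) * (if c then uy else ux) (take j (drop i w)).

Definition uGx (g : A) : A := cder ly g.
Definition uGy (g : A) : A := oppA (cder lx g).

Definition divA (ux uy : A) : A := addA (dL lx ux) (dL ly uy).

Definition in_krv (ux uy : A) : Prop :=
  [/\ inL ux, inL uy,
      (forall w, der_ext ux uy (brA X Y) w = 0) &
      tr_eq0 (divA ux uy)].

(* delta_{2n} = Theta(x (x) ad_y^{2n}(x)), viewed as tr(x ad_y^{2n}(x)) *)
Definition delta (n : nat) : A := mulA X (iter (2 * n) ady X).

(* Let P_m = ad_y^m(x) = sum_(a+b=m) (-1)^b 'C(m,b) y^a x y^b and delta = tr(x P_m)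
   with m even, so that the coefficients of P_m are symmetric in (a, b).  Then
   d_x delta = 2 P_m lies in L.  For d_y delta, both it and the alternating sum
   S = sum_(i<m) (-1)^i [P_(m-1-i), P_i] have ad_y-image 2 [P_m, x] (for S because
   ad_y is a derivation and the sum telescopes), and both vanish on powers of y,
   where ad_y is injective; hence d_y delta = S lies in L.  Consequently
   u([x,y]) = -ad_y(d_y delta) - 2 [x, P_m] = 0.  Finally the divergence is
   supported on the words y^a x y^b and equals [y, G] for an explicit G, so its
   trace vanishes. *)

From Stdlib Require Import Rdefinitions FunctionalExtensionality.
From Pilot Require Import Defs.
From mathcomp Require Import all_boot all_order all_algebra.
From mathcomp Require Import Rstruct ring zify.

Set Implicit Arguments.
Unset Strict Implicit.
Unset Printing Implicit Defensive.
Import GRing.Theory.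
Local Open Scope ring_scope.

Local Notation mulA := Defs.mulA.
Local Notation addA := Defs.addA.
Local Notation oppA := Defs.oppA.
Local Notation scaleA := Defs.scaleA.

Lemma mulA_nil p q : mulA p q [::] = p [::] * q [::].
Proof. by rewrite /mulA big_ord1. Qed.

Lemma mulA_letterl_nil c p : mulA (letter c) p [::] = 0.
Proof. by rewrite mulA_nil /letter mul0r. Qed.

Lemma mulA_letterl c p d w : mulA (letter c) p (d :: w) = (d == c)%:R * p w.
Proof.
rewrite /mulA !big_ord_recl /= big1 => [|i _].
  by rewrite /letter /= take0 drop0 eqseq_cons andbT mul0r add0r addr0.
by case: w i => [[]|e w i] //=; rewrite /letter /= eqseq_cons andbF mul0r.
Qed.

Lemma mulA_letterr_nil c p : mulA p (letter c) [::] = 0.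
Proof. by rewrite mulA_nil /letter mulr0. Qed.

Lemma mulA_letterr c p w d : mulA p (letter c) (rcons w d) = (d == c)%:R * p w.
Proof.
rewrite /mulA size_rcons big_ord_recr /= drop_oversize ?size_rcons //.
rewrite {2}/letter mulr0 addr0 big_ord_recr /= -cats1 takel_cat // take_size.
rewrite drop_size_cat // big1 => [|[i hi] _ /=].
  by rewrite /letter /= eqseq_cons andbT add0r mulrC.
rewrite drop_cat hi /letter; case: eqP => [/(congr1 size)|_]; last by rewrite mulr0.
by rewrite size_cat size_drop addn1 => -[]; lia.
Qed.

Lemma letter_mulA c p q : mulA (letter c) (mulA p q) = mulA (mulA (letter c) p) q.
Proof.
apply: functional_extensionality => -[|d w].
  by rewrite mulA_letterl_nil mulA_nil mulA_letterl_nil mul0r.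
rewrite mulA_letterl {2}/mulA big_ord_recl mulA_letterl_nil mul0r add0r mulr_sumr.
by apply: eq_bigr => i _; rewrite /= mulA_letterl mulrA.
Qed.

Lemma mulA_letterA c p q : mulA (mulA p q) (letter c) = mulA p (mulA q (letter c)).
Proof.
apply: functional_extensionality => w; case/lastP: w => [|w d].
  by rewrite mulA_letterr_nil mulA_nil mulA_letterr_nil mulr0.
rewrite mulA_letterr {2}/mulA size_rcons big_ord_recr /= drop_oversize ?size_rcons //.
rewrite mulA_letterr_nil mulr0 addr0 mulr_sumr; apply: eq_bigr => -[i hi] _ /=.
by rewrite drop_rcons // mulA_letterr -cats1 takel_cat // mulrCA.
Qed.

Lemma mulA_letter_midA c p q :
  mulA p (mulA (letter c) q) = mulA (mulA p (letter c)) q.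
Proof.
apply: functional_extensionality => w.
set cq := mulA (letter c) q; set pc := mulA p (letter c).
rewrite /mulA big_ord_recr big_ord_recl /= drop_size take0 /cq /pc.
rewrite mulA_letterl_nil mulA_letterr_nil mulr0 mul0r addr0 add0r.
apply: eq_bigr => -[i hi] _ /=.
rewrite (drop_nth ly hi) (take_nth ly hi) mulA_letterl mulA_letterr.
by rewrite mulrCA mulrA.
Qed.

Lemma mulA_addl p q r : mulA (addA p q) r = addA (mulA p r) (mulA q r).
Proof.
apply: functional_extensionality => w; rewrite /mulA /addA -big_split /=.
by apply: eq_bigr => i _; rewrite mulrDl.
Qed.

Lemma mulA_addr p q r : mulA r (addA p q) = addA (mulA r p) (mulA r q).
Proof.
apply: functional_extensionality => w; rewrite /mulA /addA -big_split /=.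
by apply: eq_bigr => i _; rewrite mulrDr.
Qed.

Lemma mulA_oppl p r : mulA (oppA p) r = oppA (mulA p r).
Proof.
apply: functional_extensionality => w; rewrite /mulA /oppA -sumrN.
by apply: eq_bigr => i _; rewrite mulNr.
Qed.

Lemma mulA_oppr p r : mulA r (oppA p) = oppA (mulA r p).
Proof.
apply: functional_extensionality => w; rewrite /mulA /oppA -sumrN.
by apply: eq_bigr => i _; rewrite mulrN.
Qed.

Lemma mulA_scalel c p r : mulA (scaleA c p) r = scaleA c (mulA p r).
Proof.
apply: functional_extensionality => w; rewrite /mulA /scaleA mulr_sumr.
by apply: eq_bigr => i _; rewrite mulrA.
Qed.

Lemma mulA_scaler c p r : mulA r (scaleA c p) = scaleA c (mulA r p).
Proof.
apply: functional_extensionality => w; rewrite /mulA /scaleA mulr_sumr.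
by apply: eq_bigr => i _; rewrite mulrCA.
Qed.

Lemma mulA_sumr I (r : seq I) (F : I -> A) p w :
  mulA p (fun u => \sum_(i <- r) F i u) w = \sum_(i <- r) mulA p (F i) w.
Proof.
rewrite /mulA exchange_big /=; apply: eq_bigr => j _; exact: mulr_sumr.
Qed.

Lemma mulA_suml I (r : seq I) (F : I -> A) p w :
  mulA (fun u => \sum_(i <- r) F i u) p w = \sum_(i <- r) mulA (F i) p w.
Proof.
rewrite /mulA exchange_big /=; apply: eq_bigr => j _; exact: mulr_suml.
Qed.

Lemma brA_anti p q w : brA p q w = - brA q p w.
Proof. by rewrite /brA /addA /oppA opprD opprK addrC. Qed.

Lemma adyE p w : ady p w = mulA Y p w - mulA p Y w.
Proof. by []. Qed.

Lemma ady_brA p q : ady (brA p q) = addA (brA (ady p) q) (brA p (ady q)).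
Proof.
rewrite /ady /brA /Y !(mulA_addl, mulA_addr, mulA_oppl, mulA_oppr).
rewrite !letter_mulA !mulA_letterA !mulA_letter_midA.
by apply: functional_extensionality => w; rewrite /addA /oppA; ring.
Qed.

Lemma ady_sub p q : ady (addA p (oppA q)) = addA (ady p) (oppA (ady q)).
Proof.
rewrite /ady /brA !(mulA_addl, mulA_addr, mulA_oppl, mulA_oppr).
by apply: functional_extensionality => w; rewrite /addA /oppA; ring.
Qed.

Lemma ady_scale c p : ady (scaleA c p) = scaleA c (ady p).
Proof.
rewrite /ady /brA mulA_scaler mulA_scalel.
by apply: functional_extensionality => w; rewrite /addA /oppA /scaleA mulrDr mulrN.
Qed.

Lemma ady_sum I (r : seq I) (F : I -> A) w :
  ady (fun u => \sum_(i <- r) F i u) w = \sum_(i <- r) ady (F i) w.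
Proof. by rewrite adyE mulA_sumr mulA_suml -sumrB. Qed.

Section Grading.

Variable deg : seq bool -> nat.
Hypothesis degD : forall u v, deg (u ++ v) = (deg u + deg v)%N.

Definition homog k (p : A) := forall w, deg w != k -> p w = 0.

Lemma homog_letter c : homog (deg [:: c]) (letter c).
Proof. by move=> w; rewrite /letter; case: (eqVneq w [:: c]) => [->|]; rewrite ?eqxx. Qed.

Lemma homog_mulA k l p q : homog k p -> homog l q -> homog (k + l)%N (mulA p q).
Proof.
move=> hp hq w hw; rewrite /mulA big1 // => i _.
move: hw; rewrite -[in deg w](cat_take_drop i w) degD.
case: (eqVneq (deg (take i w)) k) => [-> | /hp -> _]; last by rewrite mul0r.
by rewrite eqn_add2l => /hq ->; rewrite mulr0.
Qed.

Lemma homog_brA k l p q : homog k p -> homog l q -> homog (k + l)%N (brA p q).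
Proof.
move=> hp hq w hw; rewrite /brA /addA /oppA (homog_mulA hp hq) //.
by rewrite (homog_mulA hq hp) ?oppr0 ?addr0 // addnC.
Qed.

Lemma homog_ady k p : homog k p -> homog (deg [:: ly] + k)%N (ady p).
Proof. exact/homog_brA/homog_letter. Qed.

Lemma cder_homog k c p v : homog k p -> (deg v + deg [:: c])%N != k ->
  cder c p v = 0.
Proof.
move=> hp hv; rewrite /cder big1 // => i _; apply: hp.
suff -> : deg (drop i v ++ c :: take i v) = (deg v + deg [:: c])%N by [].
by rewrite -[in deg v](cat_take_drop i v) -cat1s !degD; lia.
Qed.

End Grading.

Local Notation xdeg := (count_mem lx).

Lemma xdegD u v : xdeg (u ++ v) = (xdeg u + xdeg v)%N.
Proof. exact: count_cat. Qed.

Lemma homog_ady_x k p : homog xdeg k p -> homog xdeg k (ady p).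
Proof. exact: homog_ady xdegD k p. Qed.

Lemma nseqSr (T : Type) k (a : T) : nseq k.+1 a = rcons (nseq k a) a.
Proof. by rewrite -cats1 -addn1 nseqD. Qed.

(* [ad_y r = 0] says [r (w y) = r (y w)] and [r (w x) = 0]; rotating its trailing
   [y]s to the front makes any word that is not a power of [y] end with [x]. *)
Lemma ker_ady (r : A) : (forall w, ady r w = 0) ->
  (forall k, r (nseq k ly) = 0) -> forall w, r w = 0.
Proof.
move=> ady_r0 r_ypow.
have r_x_last w : r (rcons w lx) = 0.
  have := ady_r0 (ly :: rcons w lx).
  by rewrite adyE -rcons_cons mulA_letterl mulA_letterr mul1r mul0r subr0.
have r_rot w : r (rcons w ly) = r (ly :: w).
  have /eqP := ady_r0 (ly :: rcons w ly).
  by rewrite adyE -{2}rcons_cons mulA_letterl mulA_letterr !mul1r subr_eq0 => /eqP.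
have r_rot_ypow k u : r (u ++ nseq k ly) = r (nseq k ly ++ u).
  elim: k u => [|k IH] u; first by rewrite cats0.
  by rewrite nseqSr -rcons_cat r_rot -cat_cons IH -cat1s catA cats1 -nseqSr.
suff r_ypow_suffix k w : r (w ++ nseq k ly) = 0.
  by move=> w; rewrite -(cats0 w); exact: (r_ypow_suffix 0%N).
elim/last_ind: w k => [|w [] IH] k; first exact: r_ypow.
  by rewrite cat_rcons; exact: (IH k.+1).
by rewrite r_rot_ypow -rcons_cat r_x_last.
Qed.

Definition yxy a b : seq bool := nseq a ly ++ lx :: nseq b ly.
Definition yxyxy a b c : seq bool := yxy a b ++ lx :: nseq c ly.

Lemma xdeg_nseq_y k : xdeg (nseq k ly) = 0%N.
Proof. by rewrite count_nseq. Qed.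

Lemma xdeg_yxy a b : xdeg (yxy a b) = 1%N.
Proof. by rewrite xdegD /= !xdeg_nseq_y. Qed.

Lemma size_yxy a b : size (yxy a b) = (a + b).+1.
Proof. by rewrite size_cat /= !size_nseq addnS. Qed.

Lemma yxy_rS a b : yxy a b.+1 = rcons (yxy a b) ly.
Proof. by rewrite /yxy nseqSr -rcons_cons rcons_cat. Qed.

Lemma yxy_r0 a : yxy a 0 = rcons (nseq a ly) lx.
Proof. by rewrite /yxy cats1. Qed.

Lemma yxyxy_rS a b c : yxyxy a b c.+1 = rcons (yxyxy a b c) ly.
Proof. by rewrite /yxyxy nseqSr -rcons_cons rcons_cat. Qed.

Lemma yxyxy_r0 a b : yxyxy a b 0 = rcons (yxy a b) lx.
Proof. by rewrite /yxyxy cats1. Qed.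

Lemma xdeg0_nseq w : xdeg w = 0%N -> w = nseq (size w) ly.
Proof. by elim: w => [|[] w IH] //= /IH {1}->. Qed.

Lemma xdeg1_yxy w : xdeg w = 1%N -> exists a b, w = yxy a b.
Proof.
elim: w => [|[] w IH] //=; last by case=> /xdeg0_nseq ->; exists 0%N, (size w).
by rewrite add0n => /IH [a [b ->]]; exists a.+1, b.
Qed.

Lemma xdeg2_yxyxy w : xdeg w = 2%N -> exists a b c, w = yxyxy a b c.
Proof.
elim: w => [|[] w IH] //=; last by case=> /xdeg1_yxy [b [c ->]]; exists 0%N, b, c.
by rewrite add0n => /IH [a [b [c ->]]]; exists a.+1, b, c.
Qed.

Lemma nth_yxy a b i : (nth ly (yxy a b) i == lx) = (i == a).
Proof.
rewrite nth_cat size_nseq nth_nseq; case: ltngtP => [//|hai|->]; last by rewrite subnn.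
by rewrite -(subnSK hai) /= nth_nseq if_same.
Qed.

Lemma nth_yxyxy a b c i :
  (nth ly (yxyxy a b c) i == lx) = (i == a) || (i == (a + b).+1).
Proof.
rewrite nth_cat size_yxy; case: ltngtP => [hi|hi|->].
- by rewrite nth_yxy orbF.
- rewrite -(subnSK hi) /= nth_nseq if_same orbF.
  by apply/esym/negbTE/eqP; lia.
- by rewrite subnn orbT.
Qed.

Lemma drop_sizeS_cat (T : Type) n (u s : seq T) d :
  size u = n -> drop n.+1 (u ++ d :: s) = s.
Proof. by move=> <-; elim: u => [|e u IH] /=; rewrite ?drop0. Qed.

Definition yxy_poly (g : nat -> nat -> R) : A := fun w =>
  if xdeg w == 1%N then g (index lx w) (size w - (index lx w).+1)%N else 0.

Lemma yxy_poly_yxy g a b : yxy_poly g (yxy a b) = g a b.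
Proof.
rewrite /yxy_poly xdeg_yxy size_yxy /yxy index_cat mem_nseq andbF /=.
by rewrite size_nseq addn0 subSS addKn.
Qed.

Lemma homog_yxy_poly g : homog xdeg 1 (yxy_poly g).
Proof. by move=> w /negbTE hw; rewrite /yxy_poly hw. Qed.

Lemma yxy_polyE p g : homog xdeg 1 p -> (forall a b, p (yxy a b) = g a b) ->
  p = yxy_poly g.
Proof.
move=> hp pg; apply: functional_extensionality => w.
have [/xdeg1_yxy [a [b ->]]|hw] := eqVneq (xdeg w) 1%N.
  by rewrite pg yxy_poly_yxy.
by rewrite hp // homog_yxy_poly.
Qed.

Lemma ady_yxy p a b : ady p (yxy a b) =
  (if a is a'.+1 then p (yxy a' b) else 0) - (if b is b'.+1 then p (yxy a b') else 0).
Proof.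
rewrite adyE; congr (_ - _).
  by case: a => [|a]; rewrite [yxy _ _]/= mulA_letterl ?mul0r ?mul1r.
by case: b => [|b]; rewrite ?yxy_r0 ?yxy_rS mulA_letterr ?mul0r ?mul1r.
Qed.

Lemma ady_yxyxy p a b c : ady p (yxyxy a b c) =
  (if a is a'.+1 then p (yxyxy a' b c) else 0) -
  (if c is c'.+1 then p (yxyxy a b c') else 0).
Proof.
rewrite adyE; congr (_ - _).
  by case: a => [|a]; rewrite [yxyxy _ _ _]/= mulA_letterl ?mul0r ?mul1r.
by case: c => [|c]; rewrite ?yxyxy_r0 ?yxyxy_rS mulA_letterr ?mul0r ?mul1r.
Qed.

Definition ady_coef (g : nat -> nat -> R) a b :=
  (if a is a'.+1 then g a' b else 0) - (if b is b'.+1 then g a b' else 0).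

Lemma ady_yxy_poly g : ady (yxy_poly g) = yxy_poly (ady_coef g).
Proof.
apply: yxy_polyE; first exact/homog_ady_x/homog_yxy_poly.
by move=> a b; rewrite ady_yxy /ady_coef; case: a; case: b => *; rewrite ?yxy_poly_yxy.
Qed.

Definition adyX_coef m a b : R :=
  if (a + b == m)%N then (-1) ^+ b * ('C(m, b))%:R else 0.

Lemma ady_coef_adyX m : ady_coef (adyX_coef m) = adyX_coef m.+1.
Proof.
apply: functional_extensionality => a; apply: functional_extensionality => b.
rewrite /ady_coef /adyX_coef; case: a => [|a]; case: b => [|b].
- by rewrite subr0.
- rewrite !add0n eqSS sub0r; case: eqP => [->|_]; last by rewrite oppr0.
  by rewrite !binn exprS mulN1r mulNr.
- by rewrite !addn0 eqSS subr0 !bin0.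
- rewrite !addSn !addnS !eqSS; case: eqP => _; last by rewrite subrr.
  by rewrite binS natrD exprS; ring.
Qed.

Lemma adyXE m : iter m ady X = yxy_poly (adyX_coef m).
Proof.
elim: m => [|m IH]; last by rewrite iterS IH ady_yxy_poly ady_coef_adyX.
apply: yxy_polyE => [|a b]; first exact: (@homog_letter xdeg lx).
rewrite /X /letter /adyX_coef.
by case: a => [|a]; case: b => [|b]; rewrite /= ?expr0 ?mul1r ?bin0.
Qed.

Lemma adyX_coefC m a b : ~~ odd m -> adyX_coef m a b = adyX_coef m b a.
Proof.
rewrite /adyX_coef addnC; case: eqP => // <-.
rewrite -(bin_sub (leq_addl b a)) addnK -signr_odd -[in RHS]signr_odd oddD.
by case: (odd a); case: (odd b).
Qed.

Lemma homog_adyX m : homog xdeg 1 (iter m ady X).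
Proof. by rewrite adyXE; exact: homog_yxy_poly. Qed.

Lemma homog_X_adyX m : homog xdeg 2 (mulA X (iter m ady X)).
Proof. exact: (homog_mulA xdegD (@homog_letter xdeg lx) (homog_adyX m)). Qed.

Lemma inL_sum I (r : seq I) (F : I -> A) :
  (forall i, inL (F i)) -> inL (fun w => \sum_(i <- r) F i w).
Proof.
move=> LF; elim: r => [|i r IH].
  by apply: (L_ext (L_scale 0 L_x)) => w; rewrite /scaleA big_nil mul0r.
by apply: (L_ext (L_add (LF i) IH)) => w; rewrite big_cons.
Qed.

Lemma inL_adyX m : inL (iter m ady X).
Proof. by elim: m => [|m IH]; [exact: L_x | exact: (L_br L_y IH)]. Qed.

Definition adyX_alt_sum m : A := fun w =>
  \sum_(i < m) scaleA ((-1) ^+ i) (brA (iter (m.-1 - i) ady X) (iter i ady X)) w.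

Lemma inL_adyX_alt_sum m : inL (adyX_alt_sum m).
Proof. by apply: inL_sum => i; apply/L_scale/L_br; exact: inL_adyX. Qed.

Lemma homog_adyX_alt_sum m : homog xdeg 2 (adyX_alt_sum m).
Proof.
move=> w hw; rewrite /adyX_alt_sum big1 // => i _; rewrite /scaleA.
by rewrite (homog_brA xdegD (homog_adyX _) (homog_adyX _)) ?mulr0.
Qed.

Lemma ady_adyX_alt_sum m : ~~ odd m ->
  ady (adyX_alt_sum m) = scaleA 2%:R (brA (iter m ady X) X).
Proof.
move=> m_even; apply: functional_extensionality => w; rewrite ady_sum.
pose g k := (-1) ^+ k.+1 * brA (iter (m - k) ady X) (iter k ady X) w.
rewrite (eq_bigr (fun i : 'I_m => g i.+1 - g i)) => [|[i hi] _]; last first.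
  rewrite ady_scale ady_brA /scaleA /addA -!iterS /g.
  have -> : (m.-1 - i).+1 = (m - i)%N by lia.
  have -> : (m - i.+1)%N = (m.-1 - i)%N by lia.
  by rewrite !exprS; ring.
rewrite -(big_mkord xpredT (fun i => g i.+1 - g i)) telescope_sumr // /g.
rewrite subn0 subnn exprS -signr_odd (negbTE m_even) expr0 /scaleA (brA_anti X).
by ring.
Qed.

Lemma cder_mulXl c q v : cder c (mulA X q) v =
  \sum_(0 <= i < size v | nth ly v i == lx) q (drop i.+1 v ++ c :: take i v) +
  (c == lx)%:R * q v.
Proof.
rewrite /cder big_ord_recr /= drop_size take_size mulA_letterl big_mkord.
congr (_ + _).
rewrite [RHS]big_mkcond; apply: eq_bigr => -[i hi] _ /=.
by rewrite (drop_nth ly hi) /= mulA_letterl; case: eqP => _; rewrite ?mul1r ?mul0r.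
Qed.

Lemma der_ext_homog2 ux uy p d w : homog size 2 p ->
  der_ext ux uy p (d :: w) =
  \sum_(c : bool) p [:: c; last d w] * (if c then uy else ux) (belast d w) +
  \sum_(c : bool) p [:: d; c] * (if c then uy else ux) w.
Proof.
move=> hp; rewrite /der_ext /=; set n := size w.
have vanish i j c : (i + j <= n.+1)%N -> j != n ->
    p (take i (d :: w) ++ c :: drop (i + j) (d :: w)) = 0.
  move=> hij hj; apply: hp.
  by rewrite size_cat /= size_drop size_takel /= -/n; lia.
have inner (i : 'I_n.+2) :
    \sum_(j < (n.+1 - i).+1) \sum_(c : bool)
      p (take i (d :: w) ++ c :: drop (i + j) (d :: w)) *
      (if c then uy else ux) (take j (drop i (d :: w))) =
    if (i <= 1)%N then \sum_(c : bool)
      p (take i (d :: w) ++ c :: drop (i + n) (d :: w)) *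
      (if c then uy else ux) (take n (drop i (d :: w)))
    else 0.
  have iB := ltn_ord i; case: leqP => hi; last first.
    apply: big1 => -[j hj] _; apply: big1 => c _; rewrite vanish ?mul0r //=; lia.
  have hn : (n < (n.+1 - i).+1)%N by lia.
  rewrite (bigD1 (Ordinal hn)) //= [X in _ + X]big1 ?addr0 // => -[j hj] /= hjn.
  by apply: big1 => c _; rewrite vanish ?mul0r //; lia.
rewrite (eq_bigr _ (fun i _ => inner i)) 2!big_ord_recl [X in _ + (_ + X)]big1 ?addr0 //.
have drop_n : drop n (d :: w) = [:: last d w].
  by rewrite lastI -cats1 drop_size_cat ?size_belast.
have take_n : take n (d :: w) = belast d w.
  by rewrite lastI -cats1 take_size_cat ?size_belast.
by rewrite /= take0 drop0 add0n drop_n take_n drop_size take_size.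
Qed.

Lemma brA_XY_pair a b :
  brA X Y [:: a; b] = (a == lx)%:R * (b == ly)%:R - (a == ly)%:R * (b == lx)%:R.
Proof. by rewrite /brA /addA /oppA !mulA_letterl /X /Y /letter !eqseq_cons !andbT. Qed.

Lemma der_ext_brXY ux uy w : der_ext ux uy (brA X Y) w = brA ux Y w + brA X uy w.
Proof.
have XY2 : homog size 2 (brA X Y).
  exact: (homog_brA (@size_cat bool) (@homog_letter size lx) (@homog_letter size ly)).
case: w => [|d w].
  rewrite /der_ext /= !big_ord1 big1 => [|c _]; last by rewrite XY2 ?mul0r.
  by rewrite /brA /addA /oppA !(mulA_letterl_nil, mulA_letterr_nil) !subrr addr0.
have -> : brA ux Y (d :: w) = (last d w == ly)%:R * ux (belast d w) - (d == ly)%:R * ux w.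
  by rewrite /brA /addA /oppA mulA_letterl {1}lastI mulA_letterr.
have -> : brA X uy (d :: w) = (d == lx)%:R * uy w - (last d w == lx)%:R * uy (belast d w).
  by rewrite /brA /addA /oppA mulA_letterl {1}lastI mulA_letterr.
rewrite der_ext_homog2 // !big_bool /= !brA_XY_pair.
by case: (last d w); case: d => /=; ring.
Qed.

Lemma is_poly_homog_size d p : homog size d p -> is_poly p.
Proof.
by move=> hp; exists (codom (val : d.-tuple bool -> _)) => w; rewrite codom_val; exact: hp.
Qed.

Lemma tr_eq0_brA p q : is_poly p -> is_poly q -> is_poly (brA p q) -> tr_eq0 (brA p q).
Proof.
move=> Pp Pq Ppq; exists [:: (p, q)]; split; last by split=> // w; rewrite big_ord1.
by move=> i; rewrite ltnS leqn0 => /eqP ->.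
Qed.

(* [yxy_poly (divG_coef m)] is the [G] with [[y, G] = div u_delta]: it solves
   [G (a-1) b - G a (b-1) = 2 (-1)^b 'C(m+1, b+1)] on [a + b = m - 1], the
   constant [2] being forced by the boundary term at [a = 0]. *)
Definition divG_coef m a b : R :=
  if (a + b).+2 == m then 2%:R + 2%:R * ((-1) ^+ b * ('C(m, b.+1))%:R) else 0.

Lemma ady_coef_divG m a b : ~~ odd m ->
  ady_coef (divG_coef m) a b = 2%:R * adyX_coef m a.+1 b - 2%:R * adyX_coef m a b.+1.
Proof.
move=> m_even; rewrite /ady_coef /divG_coef /adyX_coef.
case: a => [|a]; case: b => [|b]; rewrite ?addSn ?addnS ?addn0 ?add0n.
- by case: eqP m_even => [<-|_ _] //; rewrite !mulr0 !subrr.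
- case: eqP => [mE|_]; last by rewrite !mulr0 !subrr.
  have sign_b : (-1) ^+ b = 1 :> R.
    by rewrite -signr_odd; move: m_even; rewrite -mE /= negbK => /negbTE ->.
  by rewrite -mE binn !exprS sign_b; ring.
- by case: eqP => _; rewrite ?expr0 ?expr1 ?bin0; ring.
- by case: eqP => _; rewrite ?exprS; ring.
Qed.

Lemma homog_size_divG m : homog size m.-1 (yxy_poly (divG_coef m)).
Proof.
move=> w hw; have [/xdeg1_yxy [a [b wE]]|] := eqVneq (xdeg w) 1%N; last exact: homog_yxy_poly.
rewrite wE yxy_poly_yxy /divG_coef; case: eqP => // mE.
by move: hw; rewrite wE size_yxy -mE eqxx.
Qed.

Section EvenDelta.

Variable m : nat.
Hypothesis m_even : ~~ odd m.

Local Notation P := (iter m ady X).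
Local Notation delta_m := (mulA X P).

Lemma cder_x_delta : cder lx delta_m = scaleA 2%:R P.
Proof.
apply: functional_extensionality => v; rewrite /scaleA.
have [/xdeg1_yxy [a [b ->]]|hv] := eqVneq (xdeg v) 1%N; last first.
  rewrite (cder_homog xdegD (homog_X_adyX m)) ?(homog_adyX m hv) ?mulr0 //=.
  by rewrite addn1 eqSS.
rewrite cder_mulXl mul1r (eq_bigl _ _ (nth_yxy a b)) big_nat1_eq size_yxy.
rewrite ltnS leq_addr.
rewrite (drop_sizeS_cat _ _ (size_nseq _ _)) (take_size_cat _ (size_nseq _ _)).
rewrite -/(yxy b a) adyXE !yxy_poly_yxy adyX_coefC //.
by rewrite mulr_natl mulr2n.
Qed.

Lemma cder_y_delta_yxyxy a b c :
  cder ly delta_m (yxyxy a b c) = 2%:R * adyX_coef m (c + a.+1) b.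
Proof.
rewrite cder_mulXl /= mul0r addr0 (eq_bigl _ _ (nth_yxyxy a b c)).
rewrite (bigID (pred1 a)) /= big_nat1_cond_eq eqxx size_cat size_yxy /=.
rewrite ifT; last by apply/andP; split; lia.
rewrite (@eq_bigl _ _ _ _ _ _ (pred1 (a + b).+1)) => [|i]; last first.
  case: (eqVneq i a) => [->|_] /=; last by rewrite andbT.
  by apply/esym/negbTE/eqP; lia.
rewrite big_nat1_eq ifT; last by apply/andP; split; lia.
have -> : drop a.+1 (yxyxy a b c) ++ ly :: take a (yxyxy a b c) = yxy b (c + a.+1).
  rewrite /yxyxy /yxy -catA (drop_sizeS_cat _ _ (size_nseq _ _)).
  by rewrite (take_size_cat _ (size_nseq _ _)) -catA nseqD.
have -> : drop (a + b).+2 (yxyxy a b c) ++ ly :: take (a + b).+1 (yxyxy a b c) =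
    yxy (c + a.+1) b.
  rewrite /yxyxy (drop_sizeS_cat _ _ (size_yxy a b)).
  by rewrite (take_size_cat _ (size_yxy a b)) /yxy nseqD -catA.
by rewrite adyXE !yxy_poly_yxy adyX_coefC // mulr_natl mulr2n.
Qed.

Lemma homog_cder_y_delta : homog xdeg 2 (cder ly delta_m).
Proof. by move=> v hv; apply: (cder_homog xdegD (homog_X_adyX m)); rewrite addn0. Qed.

Lemma ady_cder_y_delta : ady (cder ly delta_m) = scaleA 2%:R (brA P X).
Proof.
apply: functional_extensionality => w; rewrite /scaleA.
have [/xdeg2_yxyxy [a [b [c ->]]]|hw] := eqVneq (xdeg w) 2%N; last first.
  have homog_PX := homog_brA xdegD (homog_adyX m) (@homog_letter xdeg lx).
  by rewrite (homog_ady_x homog_cder_y_delta) // homog_PX ?mulr0.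
have -> : brA P X (yxyxy a b c) = mulA P X (yxyxy a b c) - mulA X P (yxyxy a b c).
  by [].
have -> : mulA P X (yxyxy a b c) = if c is _.+1 then 0 else adyX_coef m a b.
  case: c => [|c]; rewrite ?yxyxy_r0 ?yxyxy_rS mulA_letterr ?mul0r //.
  by rewrite mul1r adyXE yxy_poly_yxy.
have -> : mulA X P (yxyxy a b c) = if a is _.+1 then 0 else adyX_coef m b c.
  case: a => [|a]; rewrite [yxyxy _ _ _]/= mulA_letterl ?mul0r //.
  by rewrite mul1r adyXE yxy_poly_yxy.
rewrite ady_yxyxy.
case: a => [|a]; case: c => [|c]; rewrite ?cder_y_delta_yxyxy.
- by rewrite (adyX_coefC b) // !subrr mulr0.
- by rewrite addn1 (adyX_coefC b) // !sub0r mulrN.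
- by rewrite add0n !subr0.
- by rewrite addSnnS !subrr mulr0.
Qed.

Lemma cder_y_delta : cder ly delta_m = adyX_alt_sum m.
Proof.
apply: functional_extensionality => w; apply/eqP; rewrite -subr_eq0; apply/eqP.
move: w; apply: (ker_ady (r := addA (cder ly delta_m) (oppA (adyX_alt_sum m)))).
  by move=> w; rewrite ady_sub /addA /oppA ady_cder_y_delta ady_adyX_alt_sum // subrr.
move=> k; have hk : xdeg (nseq k ly) != 2 by rewrite xdeg_nseq_y.
by rewrite /addA /oppA homog_cder_y_delta ?homog_adyX_alt_sum ?subrr.
Qed.

Lemma der_ext_delta_brXY w : der_ext (uGx delta_m) (uGy delta_m) (brA X Y) w = 0.
Proof.
rewrite der_ext_brXY /uGx /uGy cder_x_delta (brA_anti _ Y).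
rewrite -/(ady (cder ly delta_m)) ady_cder_y_delta /brA /addA /oppA /scaleA.
by rewrite mulA_oppr mulA_oppl mulA_scaler mulA_scalel /oppA /scaleA; ring.
Qed.

Lemma div_delta : divA (uGx delta_m) (uGy delta_m) = ady (yxy_poly (divG_coef m)).
Proof.
rewrite ady_yxy_poly; apply: yxy_polyE => [v hv|a b].
  have vx : xdeg (rcons v lx) != 2 by rewrite -cats1 xdegD addn1 eqSS.
  have vy : xdeg (rcons v ly) != 1 by rewrite -cats1 xdegD addn0.
  rewrite /divA /addA /dL /uGx /uGy /oppA cder_x_delta /scaleA.
  by rewrite homog_cder_y_delta // (homog_adyX m) // mulr0 oppr0 addr0.
rewrite /divA /addA /dL /uGx /uGy /oppA -yxyxy_r0 -yxy_rS cder_y_delta_yxyxy.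
by rewrite cder_x_delta /scaleA adyXE yxy_poly_yxy add0n ady_coef_divG // mulrN.
Qed.

Lemma tr_div_delta : tr_eq0 (divA (uGx delta_m) (uGy delta_m)).
Proof.
have Y1 : homog size 1 Y := @homog_letter size ly.
rewrite div_delta; apply: tr_eq0_brA.
- exact: is_poly_homog_size Y1.
- exact: is_poly_homog_size (@homog_size_divG m).
- exact: is_poly_homog_size (homog_brA (@size_cat bool) Y1 (@homog_size_divG m)).
Qed.

End EvenDelta.

Theorem mainTheorem7 (n : nat) : in_krv (uGx (delta n)) (uGy (delta n)).
Proof.
have m_even : ~~ odd (2 * n) by rewrite mul2n odd_double.
rewrite /delta; split.
- by rewrite /uGx (cder_y_delta m_even); exact: inL_adyX_alt_sum.
- rewrite /uGy (cder_x_delta m_even).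
  by apply: (L_ext (L_scale (- 2%:R) (inL_adyX _))) => w; rewrite /scaleA /oppA mulNr.
- exact: der_ext_delta_brXY.
- exact: tr_div_delta.
Qed.
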